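(* Let $G\leq\operatorname{Homeo}(\mathfrak{C})$ be vigorous and let $A\in K_{\mathfrak{C}}$. Then a free group of rank $2$ embeds in $\operatorname{pstab}_G(A)$.
   Context: $\mathfrak{C}$ denotes a Cantor space (a space homeomorphic to $\{0,1\}^\omega$). Groups of homeomorphisms act on the right. $K_{\mathfrak{C}}$ denotes the set of non-empty proper clopen subsets of $\mathfrak{C}$. For $\gamma\in\operatorname{Homeo}(\mathfrak{C})$, $\operatorname{supp}(\gamma)=\{p\in\mathfrak{C}: p\gamma\neq p\}$. For $G\le\operatorname{Homeo}(\mathfrak{C})$ and $A\subseteq\mathfrak{C}$, $\operatorname{pstab}_G(A)=\{g\in G: pg=p \text{ for all } p\in A\}$. A subset $S\subseteq \operatorname{Homeo}(\mathfrak{C})$ is vigorous if for all clopen $A,B,C\subseteq\mathfrak{C}$ with $B,C$ non-empty proper subsets of $A$ there is $\gamma\in S$ with $\operatorname{supp}(\gamma)\subseteq A$ and $B\gamma\subseteq C$. *)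

From HB Require Import structures.
From mathcomp Require Import all_boot all_order all_algebra.
From mathcomp Require Import all_classical all_reals all_analysis.
Set Implicit Arguments. Unset Strict Implicit. Unset Printing Implicit Defensive.
Local Open Scope classical_set_scope.

Notation Cantor := cantor_space.

Definition is_homeo (f : Cantor -> Cantor) : Prop :=
  continuous f /\ exists g : Cantor -> Cantor,
    [/\ continuous g, cancel f g & cancel g f].

Definition homeo_subgroup (G : set (Cantor -> Cantor)) : Prop :=
  [/\ forall f, G f -> is_homeo f,
      G id,
      (forall f g, G f -> G g -> G (g \o f)) &
      (forall f, G f -> exists2 g, G g & cancel f g /\ cancel g f)].

Definition K_C (A : set Cantor) : Prop :=
  [/\ clopen A, A !=set0 & A <> setT].

Definition supp (g : Cantor -> Cantor) : set Cantor := [set p | g p <> p].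

Definition pstab (G : set (Cantor -> Cantor)) (A : set Cantor) :
    set (Cantor -> Cantor) :=
  [set g | G g /\ forall p, A p -> g p = p].

Definition vigorous (S : set (Cantor -> Cantor)) : Prop :=
  forall A B C : set Cantor, clopen A -> clopen B -> clopen C ->
    B !=set0 -> C !=set0 -> B `<` A -> C `<` A ->
    exists2 g, S g & supp g `<=` A /\ g @` B `<=` C.

(* Words in the free group on two generators: a letter is
   (generator : bool, inverted : bool); false = first generator. *)
Definition letter := (bool * bool)%type.

Definition inverse_letter (l : letter) : letter := (l.1, ~~ l.2).

Fixpoint reduced (w : seq letter) : bool :=
  match w with
  | x :: ((y :: _) as w') => (y != inverse_letter x) && reduced w'
  | _ => true
  end.

(* Evaluation of a word with right action: p (x1 x2 ... xn) = xn(...(x1 p)). *)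
Definition eval_letter (a a' b b' : Cantor -> Cantor) (l : letter) :=
  match l with
  | (false, false) => a | (false, true) => a'
  | (true, false) => b  | (true, true) => b'
  end.

Definition eval_word (a a' b b' : Cantor -> Cantor) (w : seq letter) :
    Cantor -> Cantor :=
  foldl (fun f l => eval_letter a a' b b' l \o f) id w.

(* A free group of rank 2 embeds in the group H (a subset of G):
   there are a, b in H, with inverses a', b', such that no non-empty
   reduced word in a^{±1}, b^{±1} evaluates to the identity. *)
Definition free_rank2_embeds (H : set (Cantor -> Cantor)) : Prop :=
  exists a a' b b' : Cantor -> Cantor,
    [/\ H a, H b, cancel a a' /\ cancel a' a, cancel b b' /\ cancel b' b &
        forall w : seq letter, w != [::] -> reduced w ->
          eval_word a a' b b' w <> id].

From mathcomp Require Import all_boot all_order all_algebra.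
From mathcomp Require Import all_classical all_reals all_analysis.
Local Open Scope classical_set_scope.

(* Let D be the complement of A; it is a non-empty clopen set.
   1. Since Cantor space is perfect, every non-empty clopen set splits into
      two disjoint non-empty clopen pieces; iterating, D contains five
      pairwise disjoint non-empty clopen sets P_0, ..., P_4.
   2. Vigour applied inside D yields, for any two disjoint non-empty clopen
      Q+, Q- in D, an element g of pstab_G(A) mapping D \ Q- into Q+; its
      inverse then maps D \ Q+ into Q-.  This gives generators a (for P_0,
      P_1) and b (for P_2, P_3).
   3. The abstract ping-pong lemma: if every letter l maps D \ P(l^-1) into
      P(l), with the P(l) pairwise disjoint, then a non-empty reduced word
      moves any point of D lying outside all P(l) (here a point of P_4)
      into some P(l), so it is not the identity. *)

Section PingPong.
Variable T : Type.

Definition eval_seq (e : letter -> T -> T) (w : seq letter) : T -> T :=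
  foldl (fun f l => e l \o f) id w.

Lemma foldl_compE (e : letter -> T -> T) w (h : T -> T) :
  foldl (fun f l => e l \o f) h w = eval_seq e w \o h.
Proof.
elim: w h => [|l w IH] h //=.
by rewrite IH [eval_seq e (l :: w)]/eval_seq /= IH.
Qed.

Lemma eval_seq_cons e l w : eval_seq e (l :: w) = eval_seq e w \o e l.
Proof. by rewrite [LHS]/eval_seq /= foldl_compE. Qed.

Lemma inverse_letterK : involutive inverse_letter.
Proof. by case=> u v; rewrite /inverse_letter /= negbK. Qed.

Variables (e : letter -> T -> T) (D : set T) (P : letter -> set T).
Hypothesis P_sub : forall l, P l `<=` D.
Hypothesis P_disj : forall l l' y, P l y -> P l' y -> l = l'.
Hypothesis e_ping : forall l y, D y -> ~ P (inverse_letter l) y -> P l (e l y).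

Lemma reduced_word_ping w l y : reduced (l :: w) -> D y ->
  ~ P (inverse_letter l) y -> P (last l w) (eval_seq e (l :: w) y).
Proof.
elim: w l y => [|l2 w IH] l y; first by move=> _; exact: e_ping.
move=> /= /andP[l2_ne_inv red_w] Dy Py.
have Pl := e_ping _ _ Dy Py.
have notP : ~ P (inverse_letter l2) (e l y).
  by move=> /(P_disj _ _ _ Pl) eq_l; move: l2_ne_inv; rewrite eq_l inverse_letterK eqxx.
rewrite eval_seq_cons /=.
exact: IH _ _ red_w (P_sub _ _ Pl) notP.
Qed.

Lemma pingpong (x0 : T) : D x0 -> (forall l, ~ P l x0) ->
  forall w, w != [::] -> reduced w -> eval_seq e w <> id.
Proof.
move=> Dx0 Px0 [//|l w] _ red_w eq_id.
by have := reduced_word_ping _ _ _ red_w Dx0 (Px0 _); rewrite eq_id; apply: Px0.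
Qed.

End PingPong.

Arguments eval_seq {T} e w.

(* Every non-empty clopen subset of Cantor space contains two disjoint
   non-empty clopen pieces: points of U differ at some coordinate i, and
   the i-th coordinate separates them by a clopen set. *)
Lemma clopen_split (U : set cantor_space) : clopen U -> U !=set0 ->
  exists U1 U2 : set cantor_space,
    [/\ clopen U1 /\ clopen U2, U1 !=set0 /\ U2 !=set0,
        U1 `<=` U, U2 `<=` U & forall y, U1 y -> U2 y -> False].
Proof.
move=> [oU cU] U0.
have [x [y [Ux Uy xy]]] := (proj1 perfectTP_ex cantor_perfect) U oU U0.
have [i xyi] : exists i, x i != y i.
  apply: contrapT => H; move/eqP: xy; apply; apply: functional_extensionality_dep => i.
  by apply/eqP; apply: contrapT => H'; apply: H; exists i; apply/negP.
have cS : clopen (proj i @^-1` [set x i] : set cantor_space).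
  apply: preimage_clopen; last exact: proj_continuous.
  by split; [exact: discrete_open | exact: discrete_closed].
exists (U `&` (proj i @^-1` [set x i])), (U `&` ~` (proj i @^-1` [set x i])).
split; [split|split| | | ].
- exact: clopenI.
- by apply: clopenI => //; apply: clopenC.
- by exists x.
- by exists y; split => //= yi; rewrite /proj in yi; rewrite yi eqxx in xyi.
- by move=> z [].
- by move=> z [].
- by move=> z [_ H1] [_ H2].
Qed.

Lemma clopen_disjoint_family (n : nat) (U : set cantor_space) :
  clopen U -> U !=set0 ->
  exists P : nat -> set cantor_space,
    (forall i, (i < n)%N -> [/\ clopen (P i), P i !=set0 & P i `<=` U]) /\
    (forall i j y, (i < n)%N -> (j < n)%N -> P i y -> P j y -> i = j).
Proof.
elim: n U => [|n IH] U clU U0; first by exists (fun=> U).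
have [U1 [U2 [[c1 c2] [ne1 ne2] s1 s2 d12]]] := clopen_split _ clU U0.
have [P [P_ok P_disj]] := IH U2 c2 ne2.
exists (fun i => if i is k.+1 then P k else U1); split.
  case=> [|i] lt_i //; have [cP neP sP] := P_ok i lt_i.
  by split=> // z /sP /s2.
case=> [|i] [|j] y //= lt_i lt_j.
- by move=> U1y Pjy; have [_ _ /(_ _ Pjy) /(d12 y U1y)] := P_ok j lt_j.
- by move=> Piy U1y; have [_ _ /(_ _ Piy) /(d12 y U1y)] := P_ok i lt_i.
- by move=> Pi Pj; rewrite (P_disj i j y lt_i lt_j Pi Pj).
Qed.

Lemma pstab_pingpong_generator (G : set (cantor_space -> cantor_space))
    (A Qp Qm : set cantor_space) :
  homeo_subgroup G -> vigorous G -> clopen A ->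
  clopen Qp -> clopen Qm -> Qp !=set0 -> Qm !=set0 ->
  Qp `<=` ~` A -> Qm `<=` ~` A -> (forall y, Qp y -> Qm y -> False) ->
  exists a a' : cantor_space -> cantor_space,
   [/\ pstab G A a, cancel a a' /\ cancel a' a,
     (forall y, (~` A) y -> ~ Qm y -> Qp (a y)) &
     (forall y, (~` A) y -> ~ Qp y -> Qm (a' y))].
Proof.
move=> [_ _ _ G_inv] vigG clA cp cm [qp Qp_qp] [qm Qm_qm] sp sm dpm.
have [a Ga [supp_a a_in]] :
    exists2 a, G a & supp a `<=` ~` A /\ a @` (~` A `&` ~` Qm) `<=` Qp.
  apply: vigG.
  - exact: clopenC.
  - by apply: clopenI; apply: clopenC.
  - exact: cp.
  - by exists qp; split; [apply: sp | apply: dpm].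
  - by exists qp.
  - split; first by move=> z [].
    by move=> eqD; have [_] := eqD qm (sm _ Qm_qm); apply.
  - by split => // eqD; exact: dpm qm (eqD qm (sm _ Qm_qm)) Qm_qm.
have fixA : forall z, A z -> a z = z.
  by move=> z Az; apply: contrapT => az; exact: supp_a z az Az.
have [a' _ [aK a'K]] := G_inv a Ga.
exists a, a'; split => //.
- by move=> y Dy Qmy; apply: a_in; exists y.
- move=> y Dy Qpy; apply: contrapT => Qma'y.
  have Da'y : (~` A) (a' y).
    by move=> Aa'y; apply: Dy; rewrite -[y]a'K fixA.
  by apply: Qpy; rewrite -[y]a'K; apply: a_in; exists (a' y).
Qed.

Definition letter_index (l : letter) : nat := (2 * l.1 + l.2)%N.

Lemma letter_index_inj : injective letter_index.
Proof. by case=> [[] []] [[] []]. Qed.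

Lemma letter_index_lt (l : letter) : (letter_index l < 4)%N.
Proof. by case: l => [[] []]. Qed.

Lemma pingpong_indexed (T : Type) (e : letter -> T -> T) (D : set T)
    (P : nat -> set T) :
  (forall i, (i < 5)%N -> P i `<=` D) ->
  (forall i j y, (i < 5)%N -> (j < 5)%N -> P i y -> P j y -> i = j) ->
  P 4 !=set0 ->
  (forall l y, D y -> ~ P (letter_index (inverse_letter l)) y ->
     P (letter_index l) (e l y)) ->
  forall w, w != [::] -> reduced w -> eval_seq e w <> id.
Proof.
move=> P_sub P_disj [x0 Px0] ping.
have lt5 l : (letter_index l < 5)%N by apply/ltnW/letter_index_lt.
apply: (@pingpong _ e D (P \o letter_index) _ _ ping x0 (P_sub 4 isT _ Px0)).
- by move=> l; apply: P_sub.
- by move=> l l' y Pl Pl'; apply/letter_index_inj/(P_disj _ _ y _ _ Pl Pl').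
- move=> l Plx0; have eq4 := P_disj _ 4 x0 (lt5 l) isT Plx0 Px0.
  by have := letter_index_lt l; rewrite eq4.
Qed.

Theorem theorem2p2 (G : set (cantor_space -> cantor_space)) (A : set cantor_space) :
  homeo_subgroup G -> vigorous G -> K_C A -> free_rank2_embeds (pstab G A).
Proof.
move=> hG vigG [clA _ AT].
have clD : clopen (~` A) by apply: clopenC.
have D0 : (~` A) !=set0 by apply/setTPn/eqP.
have [P [P_ok P_disj]] := clopen_disjoint_family 5 _ clD D0.
have gen i j : (i < 5)%N -> (j < 5)%N -> i != j -> exists a a', [/\ pstab G A a,
    cancel a a' /\ cancel a' a,
    (forall y, (~` A) y -> ~ P j y -> P i (a y)) &
    (forall y, (~` A) y -> ~ P i y -> P j (a' y))].
  move=> lt_i lt_j ij; have [ci nei si] := P_ok i lt_i; have [cj nej sj] := P_ok j lt_j.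
  apply: pstab_pingpong_generator => // y Piy Pjy.
  by move: ij; rewrite (P_disj _ _ _ lt_i lt_j Piy Pjy) eqxx.
have [a [a' [Ha ca a_ping a'_ping]]] := gen 0 1 isT isT isT.
have [b [b' [Hb cb b_ping b'_ping]]] := gen 2 3 isT isT isT.
exists a, a', b, b'; split => //.
apply: (@pingpong_indexed _ (eval_letter a a' b b') (~` A) P) => [i /P_ok[] | | | [[] []] y Dy /= Py] //.
- by have [] := P_ok 4 isT.
- exact: b'_ping.
- exact: b_ping.
- exact: a'_ping.
- exact: a_ping.
Qed.
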